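(* For all $X_1,X_3\in\{I,S,H\}$, the hybrid evaluators $X_1SX_3\mathbin{\Diamond}ISI$ and $X_1SX_3\mathbin{\Diamond}ISS$ are not one-step equivalent: there is a term (e.g. $((\lambda x.B)(x\,R))\,N$ with $R$ a redex) on which their evaluation sequences differ. In particular $HSS\mathbin{\Diamond}ISI$ and $HSS\mathbin{\Diamond}ISS$ (ahead machine), and $HSH\mathbin{\Diamond}ISI$ and $HSH\mathbin{\Diamond}ISS$ (strict normalisation), are not one-step equivalent.
   Context: Terms: $\Lambda ::= x\mid\lambda x.\Lambda\mid\Lambda\Lambda$; $[N/x]B$ is capture-avoiding substitution; a redex is a term $(\lambda x.B)N$. An evaluator is a partial function $\Lambda\rightharpoonup\Lambda$ defined by inference rules; $\mathrm{id}$ is the identity. Eval-apply template: given evaluators $la,op_1,ar_1,op_2,ar_2$ (possibly $ea$ itself), $ea$ is defined by (var) $ea(x)=x$; (abs) $ea(\lambda x.B)=\lambda x.B'$ if $la(B)=B'$; (con) $ea(MN)=B'$ if $op_1(M)=\lambda x.B$, $ar_1(N)=N'$, $ea([N'/x]B)=B'$; (neu) $ea(MN)=M''N'$ if $op_1(M)=M'$, $M'$ not an abstraction, $op_2(M')=M''$, $ar_2(N)=N'$. Premises are evaluated left to right; the evaluation sequence is the sequence of reduction steps of the whole term given by the (con) contractions (including those inside subsidiary calls) in in-order traversal of the derivation. Two evaluators are one-step equivalent iff they produce the same evaluation sequence on every term. Uniform evaluator $XYZ\in\{I,S\}^3$: $op_1=ea$, $op_2=\mathrm{id}$, and $la$,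 $ar_1$, $ar_2$ equal to $ea$ itself when the letter is $S$ and $\mathrm{id}$ when it is $I$. Hybrid evaluator $X_1X_2X_3\mathbin{\Diamond}Y_1Y_2Y_3$ ($X_i\in\{I,S,H\}$): with subsidiary $su$ the uniform evaluator $Y_1Y_2Y_3$, it is the instance $hy$ of the template with $op_1=su$, $op_2=hy$, and $la$, $ar_1$, $ar_2$ equal to $\mathrm{id}$, $su$, or $hy$ according as $X_1$, $X_2$, $X_3$ is $I$, $S$, or $H$. *)

From Stdlib Require Import Arith List.
Import ListNotations.

Inductive term : Type :=
| Var : nat -> term
| Lam : term -> term
| App : term -> term -> term.

Fixpoint lift (d c : nat) (t : term) : term :=
  match t with
  | Var n => if Nat.ltb n c then Var n else Var (n + d)
  | Lam b => Lam (lift d (S c) b)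
  | App a b => App (lift d c a) (lift d c b)
  end.

(* capture-avoiding substitution of s for variable k in t
   (variables above k are decremented: the binder is consumed) *)
Fixpoint subst (s : term) (k : nat) (t : term) : term :=
  match t with
  | Var n => if Nat.ltb n k then Var n
             else if Nat.eqb n k then lift k 0 s else Var (n - 1)
  | Lam b => Lam (subst s (S k) b)
  | App a b => App (subst s k a) (subst s k b)
  end.

Definition subst0 (N B : term) : term := subst N 0 B.

Definition is_abs (t : term) : bool :=
  match t with Lam _ => true | _ => false end.

Inductive IS := I_ | S_.
Inductive ISH := Ih | Sh | Hh.

Inductive tname : Type :=
| Uni (y1 y2 y3 : IS)
| Hyb (x1 x2 x3 : ISH) (y1 y2 y3 : IS).

Inductive ename : Type :=
| EId
| ET (e : tname).

Definition of_IS (y : IS) (self : ename) : ename :=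
  match y with I_ => EId | S_ => self end.

Definition of_ISH (x : ISH) (su self : ename) : ename :=
  match x with Ih => EId | Sh => su | Hh => self end.

Definition la (e : tname) : ename :=
  match e with
  | Uni y1 _ _ => of_IS y1 (ET e)
  | Hyb x1 _ _ y1 y2 y3 => of_ISH x1 (ET (Uni y1 y2 y3)) (ET e)
  end.
Definition op1 (e : tname) : ename :=
  match e with
  | Uni _ _ _ => ET e
  | Hyb _ _ _ y1 y2 y3 => ET (Uni y1 y2 y3)
  end.
Definition ar1 (e : tname) : ename :=
  match e with
  | Uni _ y2 _ => of_IS y2 (ET e)
  | Hyb _ x2 _ y1 y2 y3 => of_ISH x2 (ET (Uni y1 y2 y3)) (ET e)
  end.
Definition op2 (e : tname) : ename :=
  match e with
  | Uni _ _ _ => EId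
  | Hyb _ _ _ _ _ _ => ET e
  end.
Definition ar2 (e : tname) : ename :=
  match e with
  | Uni _ _ y3 => of_IS y3 (ET e)
  | Hyb _ _ x3 y1 y2 y3 => of_ISH x3 (ET (Uni y1 y2 y3)) (ET e)
  end.

(* A reduction step of the whole term: (before, after). *)
Definition step := (term * term)%type.

(* [eval e C t v tr]: evaluator e maps t to v, where t sits in the
   whole-term context C (a one-hole context, as a plugging function),
   and tr is the sequence of whole-term reduction steps performed by the
   (con) contractions of the derivation, in in-order (left-to-right)
   traversal. *)
Inductive eval : ename -> (term -> term) -> term -> term -> list step -> Prop :=
| ev_id : forall C t, eval EId C t t []
| ev_var : forall e C n, eval (ET e) C (Var n) (Var n) []
| ev_abs : forall e C B B' tr,
    eval (la e) (fun u => C (Lam u)) B B' tr ->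
    eval (ET e) C (Lam B) (Lam B') tr
| ev_con : forall e C M N B N' B' tr1 tr2 tr3,
    eval (op1 e) (fun u => C (App u N)) M (Lam B) tr1 ->
    eval (ar1 e) (fun u => C (App (Lam B) u)) N N' tr2 ->
    eval (ET e) C (subst0 N' B) B' tr3 ->
    eval (ET e) C (App M N) B'
         (tr1 ++ tr2 ++ (C (App (Lam B) N'), C (subst0 N' B)) :: tr3)
| ev_neu : forall e C M N M' M'' N' tr1 tr2 tr3,
    eval (op1 e) (fun u => C (App u N)) M M' tr1 ->
    is_abs M' = false ->
    eval (op2 e) (fun u => C (App u N)) M' M'' tr2 ->
    eval (ar2 e) (fun u => C (App M'' u)) N N' tr3 ->
    eval (ET e) C (App M N) (App M'' N') (tr1 ++ tr2 ++ tr3).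

Definition evaluates (e : tname) (t v : term) (tr : list step) : Prop :=
  eval (ET e) (fun u => u) t v tr.

(* The hybrid evaluator hands the operator of an application to its
   subsidiary.  On the operator [(\x.x) (y R)] of the witness
   [(\x.x) (y R) z], with [R = (\x.x)(\x.x)], the subsidiary [ISI]
   leaves the argument of the neutral term [y R] alone and so first
   contracts the outer redex, whereas [ISS] reduces inside [y R] and
   so first contracts [R].  Hence the two evaluation sequences already
   differ in their first step, whatever the letters [X1 X2 X3]. *)
From Stdlib Require Import Arith List.
Import ListNotations.

Definition idt : term := Lam (Var 0).
Definition redex_idt : term := App idt idt.
Definition witness : term := App (App idt (App (Var 0) redex_idt)) (Var 1).

Lemma lift_0 (t : term) (c : nat) : lift 0 c t = t.
Proof.
  revert c; induction t as [n | b IHb | a IHa b IHb]; intros c; cbn [lift].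
  - destruct (n <? c); [reflexivity | now rewrite Nat.add_0_r].
  - now rewrite IHb.
  - now rewrite IHa, IHb.
Qed.

Lemma subst0_var0 (N : term) : subst0 N (Var 0) = N.
Proof. apply lift_0. Qed.

Lemma eval_var (e : ename) (C : term -> term) (n : nat) :
  eval e C (Var n) (Var n) [].
Proof. destruct e; constructor. Qed.

Lemma eval_lam_var (e : ename) (C : term -> term) (n : nat) :
  eval e C (Lam (Var n)) (Lam (Var n)) [].
Proof. destruct e; [constructor | apply ev_abs, eval_var]. Qed.

Lemma eval_app_idt (e : tname) (C : term -> term) (N N' V : term)
    (tr1 tr2 : list step) :
  eval (ar1 e) (fun u => C (App idt u)) N N' tr1 ->
  eval (ET e) C N' V tr2 ->
  eval (ET e) C (App idt N) V (tr1 ++ (C (App idt N'), C N') :: tr2).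
Proof.
  intros HN HV.
  pose proof (ev_con e C idt N (Var 0) N' V [] tr1 tr2 (eval_lam_var _ _ 0) HN)
    as Hcon.
  rewrite subst0_var0 in Hcon.
  exact (Hcon HV).
Qed.

Lemma eval_app_var (e : tname) (C : term -> term) (n : nat) (N N' : term)
    (tr : list step) :
  eval (ar2 e) (fun u => C (App (Var n) u)) N N' tr ->
  eval (ET e) C (App (Var n) N) (App (Var n) N') tr.
Proof.
  intros HN.
  exact (ev_neu e C (Var n) N (Var n) (Var n) N' [] [] tr
           (eval_var _ _ _) eq_refl (eval_var _ _ _) HN).
Qed.

Lemma eval_app_to_var (e : tname) (C : term -> term) (M M' M'' : term)
    (n : nat) (tr1 tr2 : list step) :
  eval (op1 e) (fun u => C (App u (Var n))) M M' tr1 ->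
  is_abs M' = false ->
  eval (op2 e) (fun u => C (App u (Var n))) M' M'' tr2 ->
  eval (ET e) C (App M (Var n)) (App M'' (Var n)) (tr1 ++ tr2).
Proof.
  intros HM Hneu HM'.
  pose proof (ev_neu e C M (Var n) M' M'' (Var n) tr1 tr2 [] HM Hneu HM'
                (eval_var _ _ _)) as H.
  now rewrite app_nil_r in H.
Qed.

Lemma eval_redex_idt (e : tname) (C : term -> term) :
  eval (ET e) C redex_idt idt [(C redex_idt, C idt)].
Proof. exact (eval_app_idt e C idt idt idt [] [] (eval_lam_var _ _ 0)
                (eval_lam_var _ _ 0)). Qed.

Definition evaluable (t : term) : Prop :=
  forall (e : ename) (C : term -> term), exists v tr, eval e C t v tr.

Lemma evaluable_idt : evaluable idt.
Proof. intros e C; exists idt, []; apply eval_lam_var. Qed.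

Lemma evaluable_redex_idt : evaluable redex_idt.
Proof.
  intros [| e] C.
  - exists redex_idt, []; constructor.
  - exists idt, [(C redex_idt, C idt)]; apply eval_redex_idt.
Qed.

Lemma uni_ISI_operator (y1 : IS) (C : term -> term) (n : nat) :
  eval (ET (Uni y1 S_ I_)) C (App idt (App (Var n) redex_idt))
       (App (Var n) redex_idt)
       [(C (App idt (App (Var n) redex_idt)), C (App (Var n) redex_idt))].
Proof.
  apply (eval_app_idt _ C _ _ _ [] []); apply eval_app_var; constructor.
Qed.

Lemma uni_ISS_operator (y1 : IS) (C : term -> term) (n : nat) :
  eval (ET (Uni y1 S_ S_)) C (App idt (App (Var n) redex_idt))
       (App (Var n) idt)
       [(C (App idt (App (Var n) redex_idt)), C (App idt (App (Var n) idt)));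
        (C (App idt (App (Var n) idt)), C (App (Var n) idt))].
Proof.
  apply (eval_app_idt _ C _ _ _ [_] []); apply eval_app_var.
  - apply eval_redex_idt.
  - apply eval_lam_var.
Qed.

Lemma hybrid_app_to_var (x1 x2 x3 : ISH) (y1 y2 y3 : IS) (M R : term)
    (n m : nat) (tr : list step) :
  evaluable R ->
  eval (ET (Uni y1 y2 y3)) (fun u => App u (Var m)) M (App (Var n) R) tr ->
  exists v tr', evaluates (Hyb x1 x2 x3 y1 y2 y3) (App M (Var m)) v (tr ++ tr').
Proof.
  intros HR HM.
  destruct (HR (ar2 (Hyb x1 x2 x3 y1 y2 y3))
               (fun u => App (App (Var n) u) (Var m))) as [R' [trR HR']].
  exists (App (App (Var n) R') (Var m)), trR.
  exact (eval_app_to_var (Hyb x1 x2 x3 y1 y2 y3) (fun u => u) _ _ _ _ _ _ HM eq_refl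
           (eval_app_var _ _ _ _ _ _ HR')).
Qed.

Theorem mainTheorem8 :
  forall x1 x3 : ISH,
    exists (t v1 v2 : term) (tr1 tr2 : list step),
      evaluates (Hyb x1 Sh x3 I_ S_ I_) t v1 tr1 /\
      evaluates (Hyb x1 Sh x3 I_ S_ S_) t v2 tr2 /\
      tr1 <> tr2.
Proof.
  intros x1 x3.
  destruct (hybrid_app_to_var x1 Sh x3 I_ S_ I_ _ _ 0 1 _ evaluable_redex_idt
              (uni_ISI_operator I_ _ 0)) as [v1 [tr1 H1]].
  destruct (hybrid_app_to_var x1 Sh x3 I_ S_ S_ _ _ 0 1 _ evaluable_idt
              (uni_ISS_operator I_ _ 0)) as [v2 [tr2 H2]].
  exists witness, v1, v2; do 2 eexists.
  split; [exact H1 | split; [exact H2 |]].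
  intros Heq; inversion Heq.
Qed.
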